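(* Let $B\in\mathbb R^{n\times m}$, let $T_{\mathcal P}$ be a symmetric positive definite $n\times n$ matrix, and let $h:\mathbb R^n\to\mathbb R$ be differentiable with $h\in\mathcal S^{1,1}_{\mu_{h,T_{\mathcal P}},L_{h,T_{\mathcal P}}}$ with respect to $T_{\mathcal P}$. For $u_1,u_2\in\mathbb R^m$, $p_1,p_2\in\mathbb R^n$, let $q_i=p_i-T_{\mathcal P}^{-1}Bu_i$. Then $$\big(\nabla h(p_1)-\nabla h(p_2),-T_{\mathcal P}^{-1}B(u_1-u_2)\big)\ge\frac{\mu_{h,T_{\mathcal P}}}{2}\|q_1-q_2\|^2_{T_{\mathcal P}}-\frac{L_{h,T_{\mathcal P}}}{2}\|B(u_1-u_2)\|^2_{T_{\mathcal P}^{-1}}-\frac12\big(\nabla h(p_1)-\nabla h(p_2),p_1-p_2\big).$$ In particular, when $h(p)=(b,p)$ is affine, equality holds with all terms equal to $0$.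
   Context: For SPD $M$, $\|x\|_M=(Mx,x)^{1/2}$; $D_h(y,x)=h(y)-h(x)-(\nabla h(x),y-x)$; $h\in\mathcal S^{1,1}_{\mu_{h,M},L_{h,M}}$ w.r.t. $M$ means $\frac{\mu_{h,M}}2\|x-y\|_M^2\le D_h(y,x)\le\frac{L_{h,M}}2\|x-y\|_M^2$ for all $x,y$, with $\mu_{h,M}\ge0$ (for affine $h$ one takes $\mu_{h,T_{\mathcal P}}=L_{h,T_{\mathcal P}}=0$). *)

From HB Require Import structures.
From mathcomp Require Import all_boot all_order all_algebra.
From mathcomp Require Import all_classical all_reals all_analysis.
Set Implicit Arguments. Unset Strict Implicit. Unset Printing Implicit Defensive.
Import Order.TTheory GRing.Theory Num.Theory.
Import numFieldNormedType.Exports.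
Local Open Scope ring_scope.

Definition ip (R : realType) (n : nat) (x y : 'cV[R]_n) : R := (x^T *m y) 0 0.

Definition sqnormM (R : realType) (n : nat) (M : 'M[R]_n) (x : 'cV[R]_n) : R :=
  ip (M *m x) x.

Definition spd (R : realType) (n : nat) (M : 'M[R]_n) : Prop :=
  M^T = M /\ forall x : 'cV[R]_n, x != 0 -> 0 < ip (M *m x) x.

Definition is_gradient (R : realType) (n : nat) (h : 'cV[R]_n -> R)
  (g : 'cV[R]_n -> 'cV[R]_n) : Prop :=
  forall x, differentiable h x /\ forall v : 'cV[R]_n, 'D_v h x = ip (g x) v.

Definition bregman (R : realType) (n : nat) (h : 'cV[R]_n -> R)
  (g : 'cV[R]_n -> 'cV[R]_n) (y x : 'cV[R]_n) : R :=
  h y - h x - ip (g x) (y - x).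

Definition S11 (R : realType) (n : nat) (M : 'M[R]_n) (mu L : R)
  (h : 'cV[R]_n -> R) (g : 'cV[R]_n -> 'cV[R]_n) : Prop :=
  0 <= mu /\ forall x y : 'cV[R]_n,
    mu / 2 * sqnormM M (x - y) <= bregman h g y x /\
    bregman h g y x <= L / 2 * sqnormM M (x - y).

(** For d := T^-1 B (u1 - u2) one has ||B (u1 - u2)||_{T^-1} = ||d||_T and q1 - q2 = (p1 - p2) - d.
    The four Bregman distances D(p2 + d, p1), D(p1 - d, p2), D(p2 + d, p2), D(p1 - d, p1) combine,
    with every value of h cancelling, into (grad h p1 - grad h p2, p1 - p2 - 2 d); bounding the first
    two below by mu/2 ||p1 - p2 - d||_T^2 and the last two above by L/2 ||d||_T^2 gives the inequality.
    For affine h the gradient is the constant b, so every term vanishes. *)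
From HB Require Import structures.
From mathcomp Require Import all_boot all_order all_algebra.
From mathcomp Require Import all_classical all_reals all_analysis.
From mathcomp Require Import lra.
Set Implicit Arguments. Unset Strict Implicit. Unset Printing Implicit Defensive.
Import Order.TTheory GRing.Theory Num.Theory.
Import numFieldNormedType.Exports.
Local Open Scope ring_scope.

Section InnerProduct.
Variables (R : realType) (n : nat).
Implicit Types (x y z : 'cV[R]_n) (M : 'M[R]_n).

Lemma ipC x y : ip x y = ip y x.
Proof.
rewrite /ip; have -> : (x^T *m y) 0 0 = (x^T *m y)^T 0 0 by rewrite [RHS]mxE.
by rewrite trmx_mul trmxK.
Qed.

Lemma ipDl x y z : ip (x + y) z = ip x z + ip y z.
Proof. by rewrite /ip linearD /= mulmxDl mxE. Qed.

Lemma ipNl x z : ip (- x) z = - ip x z.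
Proof. by rewrite /ip linearN /= mulNmx mxE. Qed.

Lemma ipBl x y z : ip (x - y) z = ip x z - ip y z.
Proof. by rewrite ipDl ipNl. Qed.

Lemma ipDr x y z : ip z (x + y) = ip z x + ip z y.
Proof. by rewrite ipC ipDl !(ipC _ z). Qed.

Lemma ipNr x z : ip z (- x) = - ip z x.
Proof. by rewrite ipC ipNl ipC. Qed.

Lemma ipBr x y z : ip z (x - y) = ip z x - ip z y.
Proof. by rewrite ipDr ipNr. Qed.

Lemma ipZr (a : R) x z : ip z (a *: x) = a * ip z x.
Proof. by rewrite /ip -scalemxAr mxE. Qed.

Lemma sqnormMN M x : sqnormM M (- x) = sqnormM M x.
Proof. by rewrite /sqnormM mulmxN ipNl ipNr opprK. Qed.

Lemma sqnormM_invmx M x : M \in unitmx -> sqnormM (invmx M) (M *m x) = sqnormM M x.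
Proof. by move=> Mu; rewrite /sqnormM mulmxA mulVmx // mul1mx ipC. Qed.

Lemma spd_unitmx M : spd M -> M \in unitmx.
Proof.
move=> [Msym Mpos]; rewrite -row_free_unit; apply: inj_row_free => v vM0.
apply/eqP; apply: contraT => vn0.
have vTn0 : v^T != 0 by rewrite -(inj_eq trmx_inj) trmxK linear0.
have MvT0 : M *m v^T = 0 by rewrite -Msym -trmx_mul vM0 linear0.
by have := Mpos _ vTn0; rewrite MvT0 /ip linear0 mul0mx mxE ltxx.
Qed.

Lemma derive_ip (b x v : 'cV[R]_n) : 'D_v (ip b) x = ip b v.
Proof.
rewrite /derive; apply: lim_near_cst; first exact: norm_hausdorff.
near=> t; have tn0 : t != 0 by near: t; exact: nbhs_dnbhs_neq.
by rewrite /= ipDr ipZr addrK [_ *: _]mulrA mulVf // mul1r.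
Unshelve. all: by end_near.
Qed.

End InnerProduct.

Section Bregman.
Variables (R : realType) (n : nat) (h : 'cV[R]_n -> R) (g : 'cV[R]_n -> 'cV[R]_n).
Implicit Types (x y d : 'cV[R]_n).

Lemma bregman_four_point x y d :
  bregman h g (y + d) x + bregman h g (x - d) y
    - bregman h g (y + d) y - bregman h g (x - d) x
  = ip (g x - g y) (x - y) - 2 * ip (g x - g y) d.
Proof.
by rewrite /bregman !ipBl !(ipBr, ipDr); lra.
Qed.

Lemma S11_four_point (M : 'M[R]_n) (mu L : R) x y d : S11 M mu L h g ->
  mu * sqnormM M (x - y - d) - L * sqnormM M d
  <= ip (g x - g y) (x - y) - 2 * ip (g x - g y) d.
Proof.
move=> [_ hS]; rewrite -bregman_four_point.
have [lb1 _] := hS x (y + d); have [lb2 _] := hS y (x - d).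
have [_ ub1] := hS y (y + d); have [_ ub2] := hS x (x - d).
move: lb1 lb2 ub1 ub2.
have -> : y - (x - d) = - (x - (y + d)) by rewrite !opprB addrA.
have -> : y - (y + d) = - d by rewrite opprD addrA subrr add0r.
have -> : x - (x - d) = d by rewrite opprB addrC subrK.
rewrite !sqnormMN opprD addrA; lra.
Qed.

End Bregman.

Lemma gradient_ip (R : realType) (n : nat) (b : 'cV[R]_n) (g : 'cV[R]_n -> 'cV[R]_n) :
  is_gradient (ip b) g -> forall x v, ip (g x) v = ip b v.
Proof. by move=> g_grad x v; have [_ <-] := g_grad x; rewrite derive_ip. Qed.

Theorem lemma5p2 (R : realType) (n m : nat) (B : 'M[R]_(n, m)) (TP : 'M[R]_n) :
  spd TP ->
  (forall (h : 'cV[R]_n -> R) (gh : 'cV[R]_n -> 'cV[R]_n) (mu L : R),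
     is_gradient h gh -> S11 TP mu L h gh ->
     forall (u1 u2 : 'cV[R]_m) (p1 p2 : 'cV[R]_n),
       let q1 := p1 - invmx TP *m B *m u1 in
       let q2 := p2 - invmx TP *m B *m u2 in
       ip (gh p1 - gh p2) (- (invmx TP *m B *m (u1 - u2)))
       >= mu / 2 * sqnormM TP (q1 - q2)
          - L / 2 * sqnormM (invmx TP) (B *m (u1 - u2))
          - 1 / 2 * ip (gh p1 - gh p2) (p1 - p2)) /\
  (forall (b : 'cV[R]_n) (gh : 'cV[R]_n -> 'cV[R]_n),
     is_gradient (fun p => ip b p) gh ->
     S11 TP 0 0 (fun p => ip b p) gh /\
     forall (u1 u2 : 'cV[R]_m) (p1 p2 : 'cV[R]_n),
       let q1 := p1 - invmx TP *m B *m u1 in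
       let q2 := p2 - invmx TP *m B *m u2 in
       [/\ ip (gh p1 - gh p2) (- (invmx TP *m B *m (u1 - u2))) = 0,
           0 / 2 * sqnormM TP (q1 - q2) = 0,
           0 / 2 * sqnormM (invmx TP) (B *m (u1 - u2)) = 0 &
           1 / 2 * ip (gh p1 - gh p2) (p1 - p2) = 0]).
Proof.
move=> /spd_unitmx TPu; split.
  move=> h gh mu L _ hS u1 u2 p1 p2 /=.
  set d := invmx TP *m B *m (u1 - u2).
  have -> : p1 - invmx TP *m B *m u1 - (p2 - invmx TP *m B *m u2) = p1 - p2 - d.
    by rewrite /d mulmxBr !opprB [LHS]addrACA [RHS]addrACA [- p2 + _]addrC.
  have -> : B *m (u1 - u2) = TP *m d by rewrite /d !mulmxA mulmxV // mul1mx.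
  rewrite sqnormM_invmx // ipNr.
  have := S11_four_point p1 p2 d hS; lra.
move=> b gh gh_grad; have gh_b := gradient_ip gh_grad.
split.
  by split=> // x y; rewrite /bregman gh_b -ipBr subrr !mul0r lexx.
by move=> u1 u2 p1 p2 /=; split; rewrite ?mul0r // ipBl !gh_b subrr ?mulr0.
Qed.
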